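(* Let $a,b,c,d>0$ and let $G_B:\mathbb R^2\to\mathbb R^2$ be given by $G_B(0)=0$ and $G_B(u)=\frac{1}{|u|}\big((au_1^2+bu_2^2)u_1,\ (cu_1^2+du_2^2)u_2\big)$ for $u\neq0$. If $$\max\{a+c,b+d\}+2\sqrt{\max\{a,b\}}\sqrt{\max\{c,d\}}\le 2(b+c+2\sqrt{ad})$$ and $$2(b+c-2\sqrt{ad})\le\min\{a+c,b+d\}+2\sqrt{\min\{a,b\}}\sqrt{\min\{c,d\}},$$ then $G_B$ is monotone. If both inequalities are strict, then $G_B$ is $3$-monotone.
   Context: A map $F:\mathbb R^n\to\mathbb R^n$ is monotone if $(F(u)-F(v))\cdot(u-v)\ge0$ for all $u,v$; for $\alpha>0$ it is $\alpha$-monotone if there is $C>0$ with $(F(u)-F(v))\cdot(u-v)\ge C|u-v|^\alpha$ for all $u,v\in\mathbb R^n$. $|\cdot|$ is the Euclidean norm. *)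

From Stdlib Require Import Reals Lra.
Open Scope R_scope.

Definition vec2 := (R * R)%type.

Definition dot2 (u v : vec2) : R := fst u * fst v + snd u * snd v.
Definition sub2 (u v : vec2) : vec2 := (fst u - fst v, snd u - snd v).
Definition norm2 (u : vec2) : R := sqrt (fst u ^ 2 + snd u ^ 2).

Definition monotone2 (F : vec2 -> vec2) : Prop :=
  forall u v : vec2, 0 <= dot2 (sub2 (F u) (F v)) (sub2 u v).

Definition alpha_monotone2 (alpha : nat) (F : vec2 -> vec2) : Prop :=
  exists C : R, C > 0 /\
    forall u v : vec2, dot2 (sub2 (F u) (F v)) (sub2 u v) >= C * norm2 (sub2 u v) ^ alpha.

Definition G_B (a b c d : R) (u : vec2) : vec2 :=
  let u1 := fst u in let u2 := snd u in
  if Req_EM_T (norm2 u) 0 then (0, 0)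
  else ((a * u1 ^ 2 + b * u2 ^ 2) * u1 / norm2 u,
        (c * u1 ^ 2 + d * u2 ^ 2) * u2 / norm2 u).

(* For u, v put z = u - v and psi(t) = <G_B(v + t z), z>, so that
   <G_B(u) - G_B(v), u - v> = psi(1) - psi(0).  If the segment [v, u] avoids the origin,
   the mean value theorem gives psi(1) - psi(0) = psi'(t0), and |w|^3 psi'(t0) is the
   quadratic form z |-> |w|^2 <DG_B(w) z, z> at w = v + t0 z.  This binary quadratic form is
   nonnegative as soon as the square of its off-diagonal coefficient is at most four times the
   product of its diagonal ones, which follows (by AM-GM) from a pointwise bound that is
   exactly what the coefficient condition [monotonicity_condition] provides.  If the segment
   passes through the origin, homogeneity of degree 2 reduces the claim to <G_B(z), z> >= 0.

   G_B(a,b,c,d) = G_B(a-e,b-e,c-e,d-e) + e |u| u.  Under the strict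
   hypotheses the shifted coefficients still satisfy the condition for some small e > 0,
   so the first summand is monotone, while u |-> |u| u is 3-monotone with constant 1/2. *)

From Stdlib Require Import Reals Lra Psatz Classical.
From Coquelicot Require Import Coquelicot.
Open Scope R_scope.

Lemma sum_sq_nonneg (x y : R) : 0 <= x ^ 2 + y ^ 2.
Proof. pose proof (pow2_ge_0 x). pose proof (pow2_ge_0 y). lra. Qed.

Lemma sum_sq_pos (x y : R) : ~ (x = 0 /\ y = 0) -> 0 < x ^ 2 + y ^ 2.
Proof.
  intros Hxy. pose proof (pow2_ge_0 x). pose proof (pow2_ge_0 y).
  destruct (Req_dec x 0) as [Ex | Ex].
  - assert (Ey : y <> 0) by tauto. pose proof (pow_nonzero y 2 Ey). lra.
  - pose proof (pow_nonzero x 2 Ex). lra.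
Qed.

Lemma two_mul_le_add (X Y p : R) :
  0 <= X -> 0 <= Y -> 0 <= p -> X * Y = p * p -> 2 * p <= X + Y.
Proof.
  intros hX hY hp hXY.
  assert (hsq : (2 * p) * (2 * p) <= (X + Y) * (X + Y)).
  { replace ((X + Y) * (X + Y)) with ((X - Y) * (X - Y) + 4 * (X * Y)) by ring.
    rewrite hXY. pose proof (Rle_0_sqr (X - Y)). unfold Rsqr in *. lra. }
  destruct (Rle_lt_dec (2 * p) (X + Y)) as [| hlt]; [assumption |].
  assert ((X + Y) * (X + Y) < (2 * p) * (2 * p)) by (apply Rmult_le_0_lt_compat; lra).
  lra.
Qed.

(* Quantitative continuity of the geometric mean under lowering both arguments by e;
   it controls how the coefficient condition degrades when a, b, c, d are shifted. *)
Lemma sqrt_mul_shift (p q e : R) :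
  0 < p -> 0 < q -> 0 <= e -> e <= p -> e <= q ->
  sqrt (p * q) - e * ((p + q) / sqrt (p * q)) <= sqrt ((p - e) * (q - e)).
Proof.
  intros hp hq he hep heq.
  set (S := sqrt (p * q)). set (T := sqrt ((p - e) * (q - e))).
  assert (hS : 0 < S) by (apply sqrt_lt_R0; nra).
  assert (hS2 : S * S = p * q) by (apply sqrt_sqrt; nra).
  assert (hT2 : T * T = (p - e) * (q - e)) by (apply sqrt_sqrt; nra).
  assert (hT : 0 <= T) by apply sqrt_pos.
  assert (hTS : T <= S) by (apply sqrt_le_1_alt; nra).
  assert (hgap : S * (S - T) <= e * (p + q)) by nra.
  apply (Rmult_le_reg_l S); [exact hS |].
  replace (S * (S - e * ((p + q) / S))) with (S * S - e * (p + q)) by (field; lra).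
  nra.
Qed.

Lemma quad_form_nonneg (P Q B X Y : R) :
  0 <= P -> 0 <= Q -> B * B <= 4 * P * Q -> 0 <= P * X ^ 2 + Q * Y ^ 2 + B * X * Y.
Proof.
  intros hP hQ hB.
  destruct (Req_dec P 0) as [hP0 | hP0].
  - subst P. assert (B = 0) by nra. subst B. nra.
  - assert (h4 : 4 * P * (P * X ^ 2 + Q * Y ^ 2 + B * X * Y)
                 = (2 * P * X + B * Y) ^ 2 + (4 * P * Q - B * B) * Y ^ 2) by ring.
    assert (0 <= (2 * P * X + B * Y) ^ 2) by apply pow2_ge_0.
    assert (0 <= (4 * P * Q - B * B) * Y ^ 2) by (apply Rmult_le_pos; [lra | apply pow2_ge_0]).
    nra.
Qed.

(* The first component of G_B with coefficients (p, q); by symmetry the second component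
   at (x, y) is [comp d c y x].  Since x / 0 = 0 for the reals used here, [comp] vanishes at 0. *)
Definition comp (p q x y : R) : R := (p * x ^ 2 + q * y ^ 2) * x / sqrt (x ^ 2 + y ^ 2).

Lemma G_B_comp (a b c d : R) (u : vec2) :
  G_B a b c d u = (comp a b (fst u) (snd u), comp d c (snd u) (fst u)).
Proof.
  unfold G_B, comp, norm2.
  replace (snd u ^ 2 + fst u ^ 2) with (fst u ^ 2 + snd u ^ 2) by ring.
  destruct (Req_EM_T _ 0) as [E | E]; [| f_equal; f_equal; ring].
  rewrite E, Rdiv_0_r, Rdiv_0_r; reflexivity.
Qed.

Lemma comp_hom (p q l x y : R) : comp p q (l * x) (l * y) = l * Rabs l * comp p q x y.
Proof.
  unfold comp.
  replace ((l * x) ^ 2 + (l * y) ^ 2) with (Rsqr l * (x ^ 2 + y ^ 2)) by (unfold Rsqr; ring).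
  rewrite sqrt_mult, sqrt_Rsqr_abs by (apply Rle_0_sqr || apply sum_sq_nonneg).
  destruct (Req_dec (sqrt (x ^ 2 + y ^ 2)) 0) as [E | E].
  - rewrite E, Rmult_0_r, !Rdiv_0_r. ring.
  - destruct (Req_dec l 0) as [El | El].
    + subst l. rewrite Rabs_R0. unfold Rdiv. ring.
    + unfold Rabs; destruct (Rcase_abs l); field; lra.
Qed.

Lemma comp_shift (p q e x y : R) :
  comp p q x y = comp (p - e) (q - e) x y + e * sqrt (x ^ 2 + y ^ 2) * x.
Proof.
  unfold comp.
  destruct (Req_dec (sqrt (x ^ 2 + y ^ 2)) 0) as [E | E].
  - rewrite E, !Rdiv_0_r. ring.
  - assert (H : sqrt (x ^ 2 + y ^ 2) * sqrt (x ^ 2 + y ^ 2) = x ^ 2 + y ^ 2)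
      by apply sqrt_sqrt, sum_sq_nonneg.
    set (rho := sqrt (x ^ 2 + y ^ 2)) in *.
    replace (e * rho * x) with (e * (rho * rho) * x / rho) by (field; exact E).
    rewrite H. field. exact E.
Qed.

(* <G_B(z), z> = (a z1^4 + (b+c) z1^2 z2^2 + d z2^4) / |z| >= 0. *)
Lemma G_B_self_pairing_nonneg (a b c d z1 z2 : R) :
  0 <= a -> 0 <= b -> 0 <= c -> 0 <= d ->
  0 <= comp a b z1 z2 * z1 + comp d c z2 z1 * z2.
Proof.
  intros ha hb hc hd. unfold comp, Rdiv.
  replace (z2 ^ 2 + z1 ^ 2) with (z1 ^ 2 + z2 ^ 2) by ring.
  replace ((a * z1 ^ 2 + b * z2 ^ 2) * z1 * / sqrt (z1 ^ 2 + z2 ^ 2) * z1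
           + (d * z2 ^ 2 + c * z1 ^ 2) * z2 * / sqrt (z1 ^ 2 + z2 ^ 2) * z2)
    with ((a * (z1 ^ 2) ^ 2 + (b + c) * (z1 ^ 2 * z2 ^ 2) + d * (z2 ^ 2) ^ 2)
          * / sqrt (z1 ^ 2 + z2 ^ 2)) by ring.
  apply Rmult_le_pos.
  - pose proof (pow2_ge_0 z1). pose proof (pow2_ge_0 z2).
    assert (0 <= z1 ^ 2 * z2 ^ 2) by (apply Rmult_le_pos; assumption).
    pose proof (pow2_ge_0 (z1 ^ 2)). pose proof (pow2_ge_0 (z2 ^ 2)). nra.
  - destruct (Req_dec (sqrt (z1 ^ 2 + z2 ^ 2)) 0) as [E | E].
    + rewrite E, Rinv_0. lra.
    + apply Rlt_le, Rinv_0_lt_compat. pose proof (sqrt_pos (z1 ^ 2 + z2 ^ 2)). lra.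
Qed.

(* The coefficient condition under which G_B is monotone.  It is implied by the
   hypotheses of the theorem (the first one is weakened by dropping a nonnegative term). *)
Definition monotonicity_condition (a b c d : R) : Prop :=
  Rmax (a + c) (b + d) <= 2 * (b + c + 2 * sqrt (a * d)) /\
  2 * (b + c - 2 * sqrt (a * d)) <= Rmin (a + c) (b + d) + 2 * sqrt (Rmin a b) * sqrt (Rmin c d).

Lemma coupling_bound (a b c d s t : R) :
  0 <= a -> 0 <= b -> 0 <= c -> 0 <= d -> 0 <= s -> 0 <= t ->
  monotonicity_condition a b c d ->
  Rabs (2 * (b + c) * (s + t) - (a * s + b * t) - (c * s + d * t))
    <= 2 * sqrt ((a * s + b * t) * (c * s + d * t)) + 4 * sqrt (a * d) * (s + t).
Proof.
  intros ha hb hc hd hs ht [Hup Hlow].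
  set (sg := s + t). set (A := a * s + b * t). set (C := c * s + d * t).
  set (ma := Rmin a b). set (mc := Rmin c d).
  assert (hsg : 0 <= sg) by (unfold sg; lra).
  assert (hma : 0 <= ma) by (apply Rmin_glb; lra).
  assert (hmc : 0 <= mc) by (apply Rmin_glb; lra).
  assert (hAm : ma * sg <= A)
    by (unfold A, sg, ma; pose proof (Rmin_l a b); pose proof (Rmin_r a b); nra).
  assert (hCm : mc * sg <= C)
    by (unfold C, sg, mc; pose proof (Rmin_l c d); pose proof (Rmin_r c d); nra).
  assert (hACmax : A + C <= Rmax (a + c) (b + d) * sg)
    by (unfold A, C, sg; pose proof (Rmax_l (a + c) (b + d));
        pose proof (Rmax_r (a + c) (b + d)); nra).
  assert (hACmin : Rmin (a + c) (b + d) * sg <= A + C)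
    by (unfold A, C, sg; pose proof (Rmin_l (a + c) (b + d));
        pose proof (Rmin_r (a + c) (b + d)); nra).
  assert (hk : sqrt ma * sqrt mc * sg <= sqrt (A * C)).
  { rewrite <- sqrt_mult, <- (sqrt_square sg hsg), <- sqrt_mult by nra.
    apply sqrt_le_1_alt.
    replace (ma * mc * (sg * sg)) with ((ma * sg) * (mc * sg)) by ring.
    apply Rmult_le_compat; nra. }
  assert (hk0 : 0 <= sqrt (A * C)) by apply sqrt_pos.
  assert (hm0 : 0 <= sqrt (a * d) * sg) by (apply Rmult_le_pos; [apply sqrt_pos | lra]).
  apply Rmult_le_compat_r with (r := sg) in Hup; [| exact hsg].
  apply Rmult_le_compat_r with (r := sg) in Hlow; [| exact hsg].
  apply Rabs_le. fold sg A C ma mc in Hup, Hlow |- *. split; nra.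
Qed.

(* |u|^3 times the quadratic form z |-> <DG_B(u) z, z> at u = (x, y) != 0. *)
Definition jac_form (a b c d x y z1 z2 : R) : R :=
  (x ^ 2 + y ^ 2) * ((3 * a * x ^ 2 + b * y ^ 2) * z1 ^ 2 + 2 * (b + c) * x * y * z1 * z2
                     + (c * x ^ 2 + 3 * d * y ^ 2) * z2 ^ 2)
  - ((a * x ^ 2 + b * y ^ 2) * x * z1 + (c * x ^ 2 + d * y ^ 2) * y * z2) * (x * z1 + y * z2).

(* The Jacobian form is a binary quadratic form in z with diagonal entries P, Q and
   off-diagonal entry x y W; the bound of [coupling_bound] together with AM-GM gives
   (x y W)^2 <= 4 P Q. *)
Lemma jac_form_nonneg_of_bound (a b c d x y z1 z2 : R) :
  0 <= a -> 0 <= b -> 0 <= c -> 0 <= d ->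
  Rabs (2 * (b + c) * (x ^ 2 + y ^ 2) - (a * x ^ 2 + b * y ^ 2) - (c * x ^ 2 + d * y ^ 2))
    <= 2 * sqrt ((a * x ^ 2 + b * y ^ 2) * (c * x ^ 2 + d * y ^ 2))
       + 4 * sqrt (a * d) * (x ^ 2 + y ^ 2) ->
  0 <= jac_form a b c d x y z1 z2.
Proof.
  intros ha hb hc hd HW.
  set (s := x ^ 2) in *. set (t := y ^ 2) in *. set (sg := s + t) in *.
  set (A := a * s + b * t) in *. set (C := c * s + d * t) in *.
  set (k := sqrt (A * C)) in *. set (m := sqrt (a * d)) in *.
  set (W := 2 * (b + c) * sg - A - C) in *.
  assert (hs : 0 <= s) by apply pow2_ge_0. assert (ht : 0 <= t) by apply pow2_ge_0.
  assert (hA : 0 <= A) by (unfold A; nra). assert (hC : 0 <= C) by (unfold C; nra).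
  assert (hk : k * k = A * C) by (apply sqrt_sqrt; nra).
  assert (hm : m * m = a * d) by (apply sqrt_sqrt; nra).
  assert (hk0 : 0 <= k) by apply sqrt_pos. assert (hm0 : 0 <= m) by apply sqrt_pos.
  set (P := A * t + 2 * a * sg * s). set (Q := C * s + 2 * d * sg * t).
  assert (hform : jac_form a b c d x y z1 z2 = P * z1 ^ 2 + Q * z2 ^ 2 + (x * y * W) * z1 * z2)
    by (unfold jac_form, P, Q, W, C, A, sg, s, t; ring).
  assert (hsg : 0 <= sg) by (unfold sg; lra).
  rewrite hform. apply quad_form_nonneg.
  - unfold P. assert (0 <= a * sg * s) by (apply Rmult_le_pos; [apply Rmult_le_pos |]; lra).
    nra.
  - unfold Q. assert (0 <= d * sg * t) by (apply Rmult_le_pos; [apply Rmult_le_pos |]; lra).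
    nra.
  -
    assert (hamgm : 2 * (m * k * s * t) <= d * A * t ^ 2 + a * C * s ^ 2).
    { apply two_mul_le_add.
      - apply Rmult_le_pos; [nra | apply pow2_ge_0].
      - apply Rmult_le_pos; [nra | apply pow2_ge_0].
      - apply Rmult_le_pos; [apply Rmult_le_pos; [apply Rmult_le_pos |] |]; assumption.
      - replace (m * k * s * t * (m * k * s * t)) with ((m * m) * (k * k) * (s * t) * (s * t))
          by ring.
        rewrite hm, hk. ring. }
    assert (hPQ : 4 * P * Q = s * t * ((2 * k + 4 * m * sg) * (2 * k + 4 * m * sg))
                              + 8 * sg * (d * A * t ^ 2 + a * C * s ^ 2 - 2 * (m * k * s * t))).
    { apply Rminus_diag_uniq.
      transitivity (4 * s * t * (A * C - k * k) + 16 * sg * sg * s * t * (a * d - m * m)).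
      - unfold P, Q, sg. ring.
      - rewrite hk, hm. ring. }
    assert (hW2 : W * W <= (2 * k + 4 * m * sg) * (2 * k + 4 * m * sg)).
    { apply Rsqr_le_abs_1. rewrite (Rabs_pos_eq (2 * k + 4 * m * sg)); [lra |].
      assert (0 <= m * sg) by (apply Rmult_le_pos; lra). lra. }
    assert (hst : x * y * W * (x * y * W) = s * t * (W * W)) by (unfold s, t; ring).
    assert (0 <= s * t) by (apply Rmult_le_pos; lra).
    assert (0 <= sg * (d * A * t ^ 2 + a * C * s ^ 2 - 2 * (m * k * s * t)))
      by (apply Rmult_le_pos; lra).
    rewrite hst, hPQ.
    assert (s * t * (W * W) <= s * t * ((2 * k + 4 * m * sg) * (2 * k + 4 * m * sg)))
      by (apply Rmult_le_compat_l; lra).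
    lra.
Qed.

(* psi(t) = <G_B(v + t z), z>; monotonicity means psi 1 - psi 0 >= 0 for z = u - v. *)
Definition psi (a b c d v1 v2 z1 z2 t : R) : R :=
  comp a b (v1 + t * z1) (v2 + t * z2) * z1 + comp d c (v2 + t * z2) (v1 + t * z1) * z2.

Lemma psi_derive (a b c d v1 v2 z1 z2 t : R) :
  let x := v1 + t * z1 in let y := v2 + t * z2 in
  0 < x ^ 2 + y ^ 2 ->
  is_derive (psi a b c d v1 v2 z1 z2) t (jac_form a b c d x y z1 z2 / sqrt (x ^ 2 + y ^ 2) ^ 3).
Proof.
  intros x y H. pose proof (sqrt_lt_R0 _ H) as Hr.
  pose proof (sqrt_sqrt _ (Rlt_le _ _ H)) as Hs.
  unfold psi, comp, jac_form, x, y in *. auto_derive;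
    replace ((v2 + t * z2) * ((v2 + t * z2) * 1) + (v1 + t * z1) * ((v1 + t * z1) * 1))
      with ((v1 + t * z1) ^ 2 + (v2 + t * z2) ^ 2) by ring;
    replace ((v1 + t * z1) * ((v1 + t * z1) * 1) + (v2 + t * z2) * ((v2 + t * z2) * 1))
      with ((v1 + t * z1) ^ 2 + (v2 + t * z2) ^ 2) by ring.
  - repeat split; lra.
  - set (r := sqrt ((v1 + t * z1) ^ 2 + (v2 + t * z2) ^ 2)) in *.
    rewrite <- Hs. field. lra.
Qed.

(* If the segment avoids the origin, the mean value theorem applies. *)
Lemma psi_increment_off_origin (a b c d v1 v2 z1 z2 : R) :
  0 <= a -> 0 <= b -> 0 <= c -> 0 <= d -> monotonicity_condition a b c d ->
  (forall t, 0 <= t <= 1 -> 0 < (v1 + t * z1) ^ 2 + (v2 + t * z2) ^ 2) ->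
  0 <= psi a b c d v1 v2 z1 z2 1 - psi a b c d v1 v2 z1 z2 0.
Proof.
  intros ha hb hc hd Hcond Hpos.
  set (x t := v1 + t * z1). set (y t := v2 + t * z2).
  assert (Hmin : Rmin 0 1 = 0) by (apply Rmin_left; lra).
  assert (Hmax : Rmax 0 1 = 1) by (apply Rmax_right; lra).
  destruct (MVT_gen (psi a b c d v1 v2 z1 z2) 0 1
              (fun t => jac_form a b c d (x t) (y t) z1 z2 / sqrt (x t ^ 2 + y t ^ 2) ^ 3))
    as [t0 [Ht0 Heq]]; rewrite ?Hmin, ?Hmax in *.
  - intros t Ht. apply psi_derive, Hpos. lra.
  - intros t Ht. apply continuity_pt_filterlim, (ex_derive_continuous (V := R_NormedModule)).
    eexists. apply psi_derive, Hpos. lra.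
  - rewrite Heq, Rminus_0_r, Rmult_1_r.
    apply Rdiv_le_0_compat.
    + apply jac_form_nonneg_of_bound; auto.
      apply coupling_bound; auto using pow2_ge_0.
    + apply pow_lt, sqrt_lt_R0, Hpos. exact Ht0.
Qed.

(* If the segment passes through the origin at t0, then u = (1-t0) z and v = -t0 z,
   and homogeneity reduces the increment to ((1-t0)^2 + t0^2) <G_B(z), z>. *)
Lemma psi_increment_through_origin (a b c d v1 v2 z1 z2 t0 : R) :
  0 <= a -> 0 <= b -> 0 <= c -> 0 <= d -> 0 <= t0 <= 1 ->
  v1 + t0 * z1 = 0 -> v2 + t0 * z2 = 0 ->
  0 <= psi a b c d v1 v2 z1 z2 1 - psi a b c d v1 v2 z1 z2 0.
Proof.
  intros ha hb hc hd Ht0 E1 E2. unfold psi.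
  replace (v1 + 1 * z1) with ((1 - t0) * z1) by lra.
  replace (v2 + 1 * z2) with ((1 - t0) * z2) by lra.
  replace (v1 + 0 * z1) with (- t0 * z1) by lra.
  replace (v2 + 0 * z2) with (- t0 * z2) by lra.
  rewrite !comp_hom, Rabs_Ropp, (Rabs_pos_eq t0), (Rabs_pos_eq (1 - t0)) by lra.
  replace ((1 - t0) * (1 - t0) * comp a b z1 z2 * z1 + (1 - t0) * (1 - t0) * comp d c z2 z1 * z2
           - (- t0 * t0 * comp a b z1 z2 * z1 + - t0 * t0 * comp d c z2 z1 * z2))
    with (((1 - t0) * (1 - t0) + t0 * t0) * (comp a b z1 z2 * z1 + comp d c z2 z1 * z2))
    by ring.
  apply Rmult_le_pos; [nra | apply G_B_self_pairing_nonneg; assumption].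
Qed.

Lemma G_B_monotone (a b c d : R) :
  0 <= a -> 0 <= b -> 0 <= c -> 0 <= d -> monotonicity_condition a b c d ->
  monotone2 (G_B a b c d).
Proof.
  intros ha hb hc hd Hcond [u1 u2] [v1 v2].
  unfold dot2, sub2. rewrite !G_B_comp. cbn [fst snd].
  set (z1 := u1 - v1). set (z2 := u2 - v2).
  assert (Hincr : psi a b c d v1 v2 z1 z2 1 - psi a b c d v1 v2 z1 z2 0
                  = (comp a b u1 u2 - comp a b v1 v2) * z1 + (comp d c u2 u1 - comp d c v2 v1) * z2).
  { unfold psi.
    replace (v1 + 1 * z1) with u1 by (unfold z1; ring).
    replace (v2 + 1 * z2) with u2 by (unfold z2; ring).
    rewrite !Rmult_0_l, !Rplus_0_r. ring. }
  rewrite <- Hincr.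
  destruct (classic (exists t0, 0 <= t0 <= 1 /\ v1 + t0 * z1 = 0 /\ v2 + t0 * z2 = 0))
    as [[t0 [Ht0 [E1 E2]]] | Hnone].
  - apply (psi_increment_through_origin _ _ _ _ _ _ _ _ t0); assumption.
  - apply psi_increment_off_origin; try assumption.
    intros t Ht. apply sum_sq_pos.
    intros [E1 E2]. apply Hnone. exists t. auto.
Qed.

Lemma shifted_condition (a b c d e : R) :
  0 < a -> 0 < b -> 0 < c -> 0 < d -> 0 <= e -> e <= Rmin a b -> e <= Rmin c d ->
  let K := 2 + 4 * ((a + d) / sqrt (a * d))
             + 2 * ((Rmin a b + Rmin c d) / sqrt (Rmin a b * Rmin c d)) in
  Rmax (a + c) (b + d) + e * K <= 2 * (b + c + 2 * sqrt (a * d)) ->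
  2 * (b + c - 2 * sqrt (a * d)) + e * K
    <= Rmin (a + c) (b + d) + 2 * sqrt (Rmin a b * Rmin c d) ->
  monotonicity_condition (a - e) (b - e) (c - e) (d - e).
Proof.
  intros ha hb hc hd he hab hcd K HU HL.
  set (ma := Rmin a b) in *. set (mc := Rmin c d) in *.
  assert (hma : 0 < ma) by (apply Rmin_glb_lt; lra).
  assert (hmc : 0 < mc) by (apply Rmin_glb_lt; lra).
  assert (hmaa : ma <= a) by apply Rmin_l. assert (hmab : ma <= b) by apply Rmin_r.
  assert (hmcc : mc <= c) by apply Rmin_l. assert (hmcd : mc <= d) by apply Rmin_r.
  set (kad := (a + d) / sqrt (a * d)) in *. set (km := (ma + mc) / sqrt (ma * mc)) in *.
  assert (hkad : 0 <= kad) by (apply Rlt_le, Rdiv_lt_0_compat; [lra | apply sqrt_lt_R0; nra]).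
  assert (hkm : 0 <= km) by (apply Rlt_le, Rdiv_lt_0_compat; [lra | apply sqrt_lt_R0; nra]).
  pose proof (sqrt_mul_shift a d e ha hd he ltac:(lra) ltac:(lra)) as Had. fold kad in Had.
  pose proof (sqrt_mul_shift ma mc e hma hmc he ltac:(lra) ltac:(lra)) as Hm. fold km in Hm.
  assert (hek : 0 <= e * km) by (apply Rmult_le_pos; lra).
  assert (hekad : 0 <= e * kad) by (apply Rmult_le_pos; lra).
  unfold K in HU, HL. split.
  - apply Rmax_lub.
    + pose proof (Rmax_l (a + c) (b + d)). nra.
    + pose proof (Rmax_r (a + c) (b + d)). nra.
  -
    assert (Emin1 : Rmin (a - e) (b - e) = ma - e)
      by (unfold ma, Rmin; destruct (Rle_dec (a - e) (b - e)), (Rle_dec a b); lra).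
    assert (Emin2 : Rmin (c - e) (d - e) = mc - e)
      by (unfold mc, Rmin; destruct (Rle_dec (c - e) (d - e)), (Rle_dec c d); lra).
    assert (Emin3 : Rmin (a + c) (b + d) - 2 * e <= Rmin (a - e + (c - e)) (b - e + (d - e))).
    { apply Rmin_glb; [pose proof (Rmin_l (a + c) (b + d)) | pose proof (Rmin_r (a + c) (b + d))];
        lra. }
    rewrite Emin1, Emin2, Rmult_assoc, <- sqrt_mult by lra.
    nra.
Qed.

Lemma strict_condition_shift (a b c d : R) :
  0 < a -> 0 < b -> 0 < c -> 0 < d ->
  Rmax (a + c) (b + d) + 2 * sqrt (Rmax a b) * sqrt (Rmax c d)
    < 2 * (b + c + 2 * sqrt (a * d)) ->
  2 * (b + c - 2 * sqrt (a * d))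
    < Rmin (a + c) (b + d) + 2 * sqrt (Rmin a b) * sqrt (Rmin c d) ->
  exists e, 0 < e /\ e < a /\ e < b /\ e < c /\ e < d /\
            monotonicity_condition (a - e) (b - e) (c - e) (d - e).
Proof.
  intros ha hb hc hd H1 H2.
  set (ma := Rmin a b) in *. set (mc := Rmin c d) in *.
  assert (hma : 0 < ma) by (apply Rmin_glb_lt; lra).
  assert (hmc : 0 < mc) by (apply Rmin_glb_lt; lra).
  set (K := 2 + 4 * ((a + d) / sqrt (a * d)) + 2 * ((ma + mc) / sqrt (ma * mc))).
  assert (hK : 0 < K).
  { unfold K.
    assert (0 < (a + d) / sqrt (a * d)) by (apply Rdiv_lt_0_compat; [lra | apply sqrt_lt_R0; nra]).
    assert (0 < (ma + mc) / sqrt (ma * mc))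
      by (apply Rdiv_lt_0_compat; [lra | apply sqrt_lt_R0; nra]).
    lra. }
  set (gU := 2 * (b + c + 2 * sqrt (a * d)) - Rmax (a + c) (b + d)).
  set (gL := Rmin (a + c) (b + d) + 2 * sqrt (ma * mc) - 2 * (b + c - 2 * sqrt (a * d))).
  assert (hgU : 0 < gU).
  { pose proof (sqrt_pos (Rmax a b)). pose proof (sqrt_pos (Rmax c d)).
    assert (0 <= sqrt (Rmax a b) * sqrt (Rmax c d)) by (apply Rmult_le_pos; assumption).
    unfold gU. lra. }
  assert (hgL : 0 < gL) by (unfold gL; rewrite sqrt_mult by lra; lra).
  set (e := Rmin (Rmin ma mc / 2) (Rmin gU gL / K)).
  assert (he : 0 < e).
  { apply Rmin_glb_lt; apply Rdiv_lt_0_compat; try apply Rmin_glb_lt; lra. }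
  assert (hema : e <= ma / 2) by (pose proof (Rmin_l (Rmin ma mc / 2) (Rmin gU gL / K));
                                  pose proof (Rmin_l ma mc); unfold e; lra).
  assert (hemc : e <= mc / 2) by (pose proof (Rmin_l (Rmin ma mc / 2) (Rmin gU gL / K));
                                  pose proof (Rmin_r ma mc); unfold e; lra).
  assert (heK : e * K <= Rmin gU gL).
  { apply (Rmult_le_reg_r (/ K)); [apply Rinv_0_lt_compat; lra |].
    replace (e * K * / K) with e by (field; lra). apply Rmin_r. }
  pose proof (Rmin_l gU gL). pose proof (Rmin_r gU gL).
  assert (Hcond : monotonicity_condition (a - e) (b - e) (c - e) (d - e))
    by (apply shifted_condition; fold ma mc K; unfold gU, gL in *; lra).
  assert (ma <= a /\ ma <= b /\ mc <= c /\ mc <= d)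
    by (repeat split; [apply Rmin_l | apply Rmin_r | apply Rmin_l | apply Rmin_r]).
  exists e. repeat (split; [lra |]). exact Hcond.
Qed.

Definition norm_scaling (u : vec2) : vec2 := (norm2 u * fst u, norm2 u * snd u).

(* u |-> |u| u is 3-monotone with constant 1/2:
   <|u| u - |v| v, u - v> = (r + q)((r - q)^2 + |u - v|^2) / 2 >= |u - v|^3 / 2,
   with r = |u|, q = |v|, using |u - v| <= r + q (Cauchy-Schwarz). *)
Lemma norm_scaling_strongly_monotone (u v : vec2) :
  norm2 (sub2 u v) ^ 3 / 2 <= dot2 (sub2 (norm_scaling u) (norm_scaling v)) (sub2 u v).
Proof.
  destruct u as [u1 u2], v as [v1 v2]. unfold norm_scaling, dot2, sub2, norm2. cbn [fst snd].
  set (r := sqrt (u1 ^ 2 + u2 ^ 2)). set (q := sqrt (v1 ^ 2 + v2 ^ 2)).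
  set (D := sqrt ((u1 - v1) ^ 2 + (u2 - v2) ^ 2)).
  assert (hr : r * r = u1 ^ 2 + u2 ^ 2) by apply sqrt_sqrt, sum_sq_nonneg.
  assert (hq : q * q = v1 ^ 2 + v2 ^ 2) by apply sqrt_sqrt, sum_sq_nonneg.
  assert (hD : D * D = (u1 - v1) ^ 2 + (u2 - v2) ^ 2) by apply sqrt_sqrt, sum_sq_nonneg.
  assert (hr0 : 0 <= r) by apply sqrt_pos. assert (hq0 : 0 <= q) by apply sqrt_pos.
  assert (hD0 : 0 <= D) by apply sqrt_pos.
  set (uv := u1 * v1 + u2 * v2).
  (* Cauchy-Schwarz, via Lagrange's identity *)
  assert (Hcs : uv * uv <= (r * q) * (r * q)).
  { replace ((r * q) * (r * q)) with ((r * r) * (q * q)) by ring. rewrite hr, hq.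
    unfold uv. pose proof (pow2_ge_0 (u1 * v2 - u2 * v1)). nra. }
  assert (Huv : - (r * q) <= uv).
  { apply Rsqr_le_abs_0 in Hcs. unfold Rsqr in Hcs.
    rewrite (Rabs_pos_eq (r * q)) in Hcs by (apply Rmult_le_pos; lra).
    pose proof (Rabs_maj2 uv). lra. }
  assert (HD2 : D * D = r * r + q * q - 2 * uv) by (rewrite hD, hr, hq; unfold uv; ring).
  assert (HDle : D <= r + q).
  { apply Rsqr_incr_0_var; [unfold Rsqr; nra | lra]. }
  assert (HE : (r * u1 - q * v1) * (u1 - v1) + (r * u2 - q * v2) * (u2 - v2)
               = (r + q) * ((r - q) * (r - q) + D * D) / 2).
  { rewrite HD2.
    replace ((r * u1 - q * v1) * (u1 - v1) + (r * u2 - q * v2) * (u2 - v2))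
      with (r * (u1 ^ 2 + u2 ^ 2) + q * (v1 ^ 2 + v2 ^ 2) - (r + q) * uv) by (unfold uv; ring).
    rewrite <- hr, <- hq. field. }
  rewrite HE.
  assert (0 <= (r + q) * ((r - q) * (r - q))) by (apply Rmult_le_pos; [lra | apply Rle_0_sqr]).
  assert (D * (D * D) <= (r + q) * (D * D)) by (apply Rmult_le_compat_r; [apply Rle_0_sqr | lra]).
  replace (D ^ 3) with (D * (D * D)) by ring.
  lra.
Qed.

Lemma G_B_pairing_shift (a b c d e : R) (u v : vec2) :
  dot2 (sub2 (G_B a b c d u) (G_B a b c d v)) (sub2 u v)
  = dot2 (sub2 (G_B (a - e) (b - e) (c - e) (d - e) u) (G_B (a - e) (b - e) (c - e) (d - e) v))
         (sub2 u v)
    + e * dot2 (sub2 (norm_scaling u) (norm_scaling v)) (sub2 u v).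
Proof.
  destruct u as [u1 u2], v as [v1 v2].
  unfold dot2, sub2, norm_scaling, norm2. rewrite !G_B_comp. cbn [fst snd].
  rewrite (comp_shift a b e u1 u2), (comp_shift a b e v1 v2),
          (comp_shift d c e u2 u1), (comp_shift d c e v2 v1).
  replace (u2 ^ 2 + u1 ^ 2) with (u1 ^ 2 + u2 ^ 2) by ring.
  replace (v2 ^ 2 + v1 ^ 2) with (v1 ^ 2 + v2 ^ 2) by ring.
  ring.
Qed.

Theorem mainTheorem5 (a b c d : R) (ha : 0 < a) (hb : 0 < b) (hc : 0 < c) (hd : 0 < d) :
  (Rmax (a + c) (b + d) + 2 * sqrt (Rmax a b) * sqrt (Rmax c d)
     <= 2 * (b + c + 2 * sqrt (a * d)) /\
   2 * (b + c - 2 * sqrt (a * d))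
     <= Rmin (a + c) (b + d) + 2 * sqrt (Rmin a b) * sqrt (Rmin c d) ->
   monotone2 (G_B a b c d)) /\
  (Rmax (a + c) (b + d) + 2 * sqrt (Rmax a b) * sqrt (Rmax c d)
     < 2 * (b + c + 2 * sqrt (a * d)) /\
   2 * (b + c - 2 * sqrt (a * d))
     < Rmin (a + c) (b + d) + 2 * sqrt (Rmin a b) * sqrt (Rmin c d) ->
   alpha_monotone2 3 (G_B a b c d)).
Proof.
  split.
  - intros [H1 H2]. apply G_B_monotone; try lra. split; [| exact H2].
    assert (0 <= sqrt (Rmax a b) * sqrt (Rmax c d)) by (apply Rmult_le_pos; apply sqrt_pos).
    lra.
  - intros [H1 H2].
    destruct (strict_condition_shift a b c d ha hb hc hd H1 H2)
      as [e [he [hea [heb [hec [hed Hcond]]]]]].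
    assert (Hmono : monotone2 (G_B (a - e) (b - e) (c - e) (d - e)))
      by (apply G_B_monotone; lra || exact Hcond).
    exists (e / 2). split; [lra |]. intros u v.
    rewrite (G_B_pairing_shift a b c d e).
    pose proof (Hmono u v). pose proof (norm_scaling_strongly_monotone u v).
    assert (e * (norm2 (sub2 u v) ^ 3 / 2)
            <= e * dot2 (sub2 (norm_scaling u) (norm_scaling v)) (sub2 u v))
      by (apply Rmult_le_compat_l; lra).
    lra.
Qed.
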